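(* Let $G=(V,E)$ be a $k$-cozy graph with edge connectivity $\kappa'(G)=2\ell$. Let $D\subset E$ with $|D|=2\ell$ be a set of edges whose removal disconnects $G$ into two components $G_1$ and $G_2$. Then $\kappa'(G_1)\ge\ell$ and $\kappa'(G_2)\ge\ell$.
   Context: An undirected graph $G$ is $k$-cozy if it is connected, $k$-regular, and equipped with a $1$-factorization, i.e., an assignment of colors from $\{1,\dots,k\}$ to its edges such that the $k$ edges incident at each vertex receive distinct colors. The edge connectivity $\kappa'(H)$ of a graph $H$ is the minimum number of edges whose removal disconnects $H$. *)

(* Finite simple graphs with vertex set V : {set T} and
   edge set E : {set {set T}} (each edge is a 2-element subset of V). *)
From mathcomp Require Import all_boot.
Set Implicit Arguments. Unset Strict Implicit. Unset Printing Implicit Defensive.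

Section Graphs.
Variable T : finType.

Definition is_graph (V : {set T}) (E : {set {set T}}) : Prop :=
  forall e, e \in E -> e \subset V /\ #|e| = 2.

Definition erel (E : {set {set T}}) : rel T := fun x y => [set x; y] \in E.

Definition gconnected (V : {set T}) (E : {set {set T}}) : Prop :=
  V != set0 /\ forall x y, x \in V -> y \in V -> connect (erel E) x y.

Definition disconnects (V : {set T}) (E F : {set {set T}}) : Prop :=
  F \subset E /\ ~ gconnected V (E :\: F).

Definition edge_conn_ge (V : {set T}) (E : {set {set T}}) (m : nat) : Prop :=
  forall F, disconnects V E F -> m <= #|F|.

Definition edge_conn_eq (V : {set T}) (E : {set {set T}}) (m : nat) : Prop :=
  (exists F, disconnects V E F /\ #|F| = m) /\ edge_conn_ge V E m.

Definition edges_at (E : {set {set T}}) (x : T) : {set {set T}} :=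
  [set e in E | x \in e].

(* k-cozy: connected, k-regular, with a 1-factorization (proper k-edge-colouring) *)
Definition cozy (k : nat) (E : {set {set T}}) : Prop :=
  [/\ is_graph [set: T] E,
      gconnected [set: T] E,
      (forall x, #|edges_at E x| = k) &
      exists col : {set T} -> 'I_k,
        forall x, {in edges_at E x &, injective col}].

Definition induced_edges (E : {set {set T}}) (U : {set T}) : {set {set T}} :=
  [set e in E | e \subset U].

End Graphs.

From mathcomp Require Import all_boot.
From mathcomp Require Import zify.

(* Since kappa'(G) = 2l and D separates V1 from V2, D is exactly the edge
   boundary of V1.  If F disconnected G1 with |F| < l, let A be a component
   of G1 - F and B = V1 \ A.  Every boundary edge of A or of B lies in F or in
   D, and each edge of D leaves V1 through exactly one of A and B, so
   |d A| + |d B| <= 2|F| + |D| < 4l, whereas both boundaries are cuts of G,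
   of size at least 2l. *)

Set Implicit Arguments.
Unset Strict Implicit.
Unset Printing Implicit Defensive.

Section EdgeBoundary.
Variable T : finType.
Implicit Types (V S A : {set T}) (E D F : {set {set T}}).

Definition boundary E S : {set {set T}} :=
  [set e in E | (e :&: S != set0) && ~~ (e \subset S)].

Definition meets A : {set {set T}} := [set e | e :&: A != set0].

Lemma card2_eq_set2 (e : {set T}) z w :
  #|e| = 2 -> z \in e -> w \in e -> z != w -> e = [set z; w].
Proof.
move=> e2 ze we zw; apply/eqP; rewrite eq_sym eqEcard cards2 zw e2 andbT.
by apply/subsetP=> u /set2P[]->.
Qed.

Lemma is_graph_induced V E S : is_graph V E -> is_graph S (induced_edges E S).
Proof. by move=> gE e; rewrite inE => /andP[/gE[_ e2] eS]. Qed.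

Lemma boundary_disconnects V E S x y :
  x \in V -> y \in V -> x \in S -> y \notin S -> disconnects V E (boundary E S).
Proof.
move=> xV yV xS yS; split; first by apply/subsetP=> e; rewrite inE => /andP[].
case=> _ /(_ x y xV yV); apply/negP.
have inside e : e \in E :\: boundary E S -> e :&: S != set0 -> e \subset S.
  by rewrite !inE => /andP[+ eE] meetS; rewrite eE meetS /= negbK.
have closedS : closed (erel (E :\: boundary E S)) (mem S).
  have half u v : [set u; v] \in E :\: boundary E S -> u \in S -> v \in S.
    move=> uvE uS; apply: subsetP (inside _ uvE _) _ (set22 u v).
    by apply/set0Pn; exists u; rewrite !inE eqxx.
  move=> u v uvE; apply/idP/idP; first exact: half.
  by apply: half; rewrite setUC.
by apply/negP=> /(closed_connect closedS); rewrite xS (negbTE yS).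
Qed.

Lemma edge_conn_ge_boundary E m S x y :
  edge_conn_ge [set: T] E m -> x \in S -> y \notin S -> m <= #|boundary E S|.
Proof.
move=> connE xS yS; apply: connE.
exact: boundary_disconnects (in_setT x) (in_setT y) xS yS.
Qed.

Lemma boundary_sub_of_closed V E F A :
  is_graph V E ->
  (forall z w, z \in A -> [set z; w] \in E :\: F -> w \in A) ->
  boundary E A \subset F.
Proof.
move=> gE closedA; apply/subsetP=> e; rewrite inE.
case/and3P=> eE /set0Pn[z /setIP[ze zA]] /subsetPn[w we wA].
apply/negPn/negP=> eF; have [_ e2] := gE e eE.
have zw : z != w by apply: contraNneq wA => <-.
move/negP: wA; apply; apply: closedA zA _.
by rewrite -(card2_eq_set2 e2 ze we zw) inE eF eE.
Qed.

Lemma boundary_induced_setD E S A :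
  boundary (induced_edges E S) (S :\: A) = boundary (induced_edges E S) A.
Proof.
apply/setP=> e; rewrite !inE; case: (e \in E); case eS: (e \subset S) => //=.
by rewrite setIDA (setIidPl eS) setD_eq0 subsetD eS !setI_eq0 andbC.
Qed.

Lemma boundary_sub_induced E S A :
  A \subset S ->
  boundary E A \subset
    boundary (induced_edges E S) A :|: (boundary E S :&: meets A).
Proof.
move=> sAS; apply/subsetP=> e; rewrite !inE => /and3P[eE meetA nsubA].
rewrite eE meetA nsubA; case: (e \subset S) => //=.
case/set0Pn: meetA => z /setIP[ze zA].
rewrite !andbT; apply/set0Pn; exists z; rewrite inE ze (subsetP sAS) //.
Qed.

Lemma boundary_meets_setD V E S A :
  is_graph V E -> A \subset S ->
  boundary E S :&: meets (S :\: A) \subset boundary E S :\: meets A.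
Proof.
move=> gE sAS; apply/subsetP=> e; rewrite !inE.
case/andP=> /and3P[eE meetS nsubS] /set0Pn[w /setIP[we /setDP[wS wA]]].
rewrite eE meetS nsubS /= negbK andbT.
apply: contraT => /set0Pn[z /setIP[ze zA]].
have zw : z != w by apply: contraNneq wA => <-.
have [_ e2] := gE e eE; move: nsubS; rewrite (card2_eq_set2 e2 ze we zw).
by rewrite subUset !sub1set wS (subsetP sAS z zA).
Qed.

Lemma not_gconnected V E :
  V != set0 -> ~ gconnected V E ->
  exists x y, [/\ x \in V, y \in V & ~~ connect (erel E) x y].
Proof.
move=> V0 disc.
case: (boolP [exists x in V, exists y in V, ~~ connect (erel E) x y]).
  by case/exists_inP=> x xV /exists_inP[y yV nxy]; exists x, y.
move=> /negP noPair; case: disc; split=> // x y xV yV.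
apply/negPn/negP=> nxy; apply: noPair.
by apply/exists_inP; exists x => //; apply/exists_inP; exists y.
Qed.

Lemma edge_conn_ge_induced E S l :
  is_graph [set: T] E -> edge_conn_ge [set: T] E (2 * l) ->
  S != set0 -> #|boundary E S| <= 2 * l ->
  edge_conn_ge S (induced_edges E S) l.
Proof.
move=> gE connE S0 cardS F [_ disc]; rewrite leqNgt; apply/negP=> Fl.
have [x [y [xS yS nxy]]] := not_gconnected S0 disc.
set A := [set z in S | connect (erel (induced_edges E S :\: F)) x z].
have sAS : A \subset S by apply/subsetP=> z; rewrite inE => /andP[].
have xA : x \in A by rewrite inE xS connect0.
have yA : y \notin A by rewrite inE yS.
have closedA z w : z \in A -> [set z; w] \in induced_edges E S :\: F -> w \in A.
  move=> /setIdP[_ xz] zwE; have /setDP[/setIdP[_ zwS] _] := zwE.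
  by rewrite inE (subsetP zwS w (set22 z w)) (connect_trans xz (connect1 zwE)).
have cutF := boundary_sub_of_closed (is_graph_induced (S := S) gE) closedA.
have cut_le (B : {set T}) :
    B \subset S -> boundary (induced_edges E S) B \subset F ->
    #|boundary E B| <= #|F| + #|boundary E S :&: meets B|.
  move=> sBS cutBF; have := subset_leq_card (boundary_sub_induced E sBS).
  have := (leq_card_setU (boundary (induced_edges E S) B)
                         (boundary E S :&: meets B)).1.
  have := subset_leq_card cutBF; lia.
have leA := cut_le A sAS cutF.
have leB :
    #|boundary E (S :\: A)| <= #|F| + #|boundary E S :&: meets (S :\: A)|.
  by apply: cut_le; rewrite ?subsetDl ?boundary_induced_setD.
have geA := edge_conn_ge_boundary connE xA yA.
have geB : 2 * l <= #|boundary E (S :\: A)|.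
  apply: (edge_conn_ge_boundary connE (x := y) (y := x));
  by rewrite in_setD ?yA ?yS ?xA.
(* 4l <= |d A| + |d (S \ A)| <= 2|F| + |d S| < 4l *)
have := subset_leq_card (boundary_meets_setD gE sAS).
have := cardsID (meets A) (boundary E S).
lia.
Qed.

Lemma boundary_sub_of_split E D V1 V2 :
  [disjoint V1 & V2] ->
  (forall e, e \in E :\: D -> e \subset V1 \/ e \subset V2) ->
  boundary E V1 \subset D.
Proof.
move=> dis sepD; apply/subsetP=> e; rewrite inE.
case/and3P=> eE /set0Pn[z /setIP[ze zV1]] nsub; apply/negPn/negP=> eD.
have [sub|sub] : e \subset V1 \/ e \subset V2 by apply: sepD; rewrite inE eD.
  by rewrite sub in nsub.
by have := disjointFr dis zV1; rewrite (subsetP sub z ze).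
Qed.

Lemma induced_edges_setD_boundary E S :
  induced_edges (E :\: boundary E S) S = induced_edges E S.
Proof.
apply/setP=> e; rewrite !inE.
by case: (e \subset S); rewrite ?andbF ?andbT ?andbN.
Qed.

Lemma edge_conn_ge_split E D V1 V2 l :
  is_graph [set: T] E -> edge_conn_ge [set: T] E (2 * l) -> #|D| = 2 * l ->
  [disjoint V1 & V2] -> V1 != set0 -> V2 != set0 ->
  (forall e, e \in E :\: D -> e \subset V1 \/ e \subset V2) ->
  edge_conn_ge V1 (induced_edges (E :\: D) V1) l.
Proof.
move=> gE connE cardD dis V1n /set0Pn[x2 x2V2] sepD.
have [x1 x1V1] := set0Pn _ V1n.
have x2V1 : x2 \notin V1 by rewrite (disjointFl dis x2V2).
have bdD : boundary E V1 = D.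
  apply/eqP; rewrite eqEcard (boundary_sub_of_split dis sepD) cardD.
  exact: edge_conn_ge_boundary connE x1V1 x2V1.
rewrite -bdD induced_edges_setD_boundary.
by apply: edge_conn_ge_induced; rewrite ?bdD ?cardD.
Qed.

End EdgeBoundary.

Theorem mainTheorem12 (T : finType) (k l : nat) (E D : {set {set T}})
    (V1 V2 : {set T}) :
  cozy k E ->
  edge_conn_eq [set: T] E (2 * l) ->
  D \subset E ->
  #|D| = 2 * l ->
  [disjoint V1 & V2] ->
  V1 :|: V2 = [set: T] ->
  gconnected V1 (induced_edges (E :\: D) V1) ->
  gconnected V2 (induced_edges (E :\: D) V2) ->
  (forall e, e \in E :\: D -> e \subset V1 \/ e \subset V2) ->
  edge_conn_ge V1 (induced_edges (E :\: D) V1) l /\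
  edge_conn_ge V2 (induced_edges (E :\: D) V2) l.
Proof.
move=> [gE _ _ _] [_ connE] _ cardD dis _ [V1n _] [V2n _] sepD.
split; first exact: edge_conn_ge_split gE connE cardD dis V1n V2n sepD.
apply: edge_conn_ge_split gE connE cardD _ V2n V1n _.
  by rewrite disjoint_sym.
by move=> e /sepD[]; [right | left].
Qed.
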